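(* Let $k,d$ be positive integers, let $\ell = \lceil \frac{d}{k+1}\rceil - 1$ and $d' = d + \left\lceil k\ell\left(\frac{d}{k+1} - \frac{1}{2}(\ell+1)\right)\right\rceil$. Let $T$ be a tree with at least $d'+1$ edges. Then $T$ contains a vertex $r$ such that for every edge $e \in E(T)$ incident to $r$, the connected component of $T - e$ containing $r$ has at least $\ell+1$ edges. *)

From HB Require Import structures.
From mathcomp Require Import all_boot all_order all_algebra.
Set Implicit Arguments. Unset Strict Implicit. Unset Printing Implicit Defensive.
Import Order.TTheory GRing.Theory Num.Theory.

Definition simple_graph (V : finType) (adj : rel V) : Prop :=
  symmetric adj /\ irreflexive adj.

Definition edges (V : finType) (adj : rel V) : {set {set V}} :=
  [set A : {set V} | [exists x, exists y, adj x y && (A == [set x; y])]].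

Definition connected_graph (V : finType) (adj : rel V) : Prop :=
  forall x y : V, connect adj x y.

Definition acyclic (V : finType) (adj : rel V) : Prop :=
  forall c : seq V, uniq c -> 3 <= size c -> ~~ cycle adj c.

Definition is_tree (V : finType) (adj : rel V) : Prop :=
  [/\ simple_graph adj, connected_graph adj & acyclic adj].

Definition del_edge (V : finType) (adj : rel V) (ed : {set V}) : rel V :=
  fun x y => adj x y && ([set x; y] != ed).

Definition comp_del (V : finType) (adj : rel V) (ed : {set V}) (r : V) : {set V} :=
  [set v | connect (del_edge adj ed) r v].

Definition comp_del_edges (V : finType) (adj : rel V) (ed : {set V}) (r : V) : nat :=
  #|[set A in edges adj | (A != ed) && (A \subset comp_del adj ed r)]|.

Local Open Scope ring_scope.

Definition ell (k d : nat) : int := Num.ceil ((d%:R / (k.+1)%:R) : rat) - 1.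

Definition dprime (k d : nat) : int :=
  d%:Z + Num.ceil ((k%:R * (ell k d)%:~R *
     (d%:R / (k.+1)%:R - 2^-1 * ((ell k d)%:~R + 1))) : rat).

From HB Require Import structures.
From mathcomp Require Import all_boot all_order all_algebra.
From mathcomp Require Import lra zify.
Import Order.TTheory GRing.Theory Num.Theory.

(* For an edge uv of the tree T with m edges, let [branch u v] be the number
   of edges on u's side of T - uv, so that branch u v + branch v u = m - 1.
   If some branch u v is at most l, choose one with branch u v maximal and
   take r := v: crossing back over vu leaves at least m - 1 - l >= l + 1
   edges, while every other edge vw has branch v w > branch u v, hence
   branch v w > l by maximality.  If no branch is at most l, any vertex will
   do.  The hypothesis on d' only enters through d' >= d >= 2l + 1. *)

Lemma connect_fwd_closed {T : finType} {e : rel T} (a : {pred T}) {x y : T} :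
  (forall y z, e y z -> y \in a -> z \in a) -> connect e x y -> x \in a -> y \in a.
Proof.
move=> cl_a /connectP [p + ->]; elim: p x => //= z p IHp x /andP [exz pz] ax.
exact: IHp pz (cl_a _ _ exz ax).
Qed.

Section TreeBranches.

Local Set Implicit Arguments. Local Unset Strict Implicit.

Variables (V : finType) (adj : rel V).

Definition branch (u v : V) : nat := comp_del_edges adj [set u; v] u.

Lemma edgeP (A : {set V}) :
  reflect (exists x y, adj x y /\ A = [set x; y]) (A \in edges adj).
Proof.
rewrite inE; apply: (iffP existsP) => [[x /existsP [y /andP [h /eqP ->]]]|[x [y [h ->]]]].
  by exists x, y.
by exists x; apply/existsP; exists y; rewrite h eqxx.
Qed.

Lemma incident_edgeP (ed : {set V}) (r : V) :
  symmetric adj -> ed \in edges adj -> r \in ed -> exists2 w, adj r w & ed = [set r; w].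
Proof.
move=> sym /edgeP [x [y [hxy ->]]]; rewrite !inE => /orP [/eqP ->|/eqP ->].
  by exists y.
by exists x; rewrite 1?sym // setUC.
Qed.

Lemma comp_del_step (ed : {set V}) (r y z : V) :
  del_edge adj ed y z -> y \in comp_del adj ed r -> z \in comp_del adj ed r.
Proof. by rewrite !inE => hyz hy; apply: connect_trans hy (connect1 hyz). Qed.

Lemma del_edge_sub_comp (ed : {set V}) (r x y : V) :
  del_edge adj ed x y -> x \in comp_del adj ed r -> [set x; y] \subset comp_del adj ed r.
Proof.
move=> hxy hx; apply/subsetP => z; rewrite in_set2 => /orP [] /eqP -> //.
exact: comp_del_step hxy hx.
Qed.

Lemma comp_del_cover (u v x : V) : connected_graph adj ->
  x \in comp_del adj [set u; v] u :|: comp_del adj [set u; v] v.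
Proof.
move=> conn; apply: connect_fwd_closed _ _ (conn u x) _; last by rewrite !inE connect0.
move=> y z hyz; have [/eqP Eyz _|Nyz] := boolP ([set y; z] == [set u; v]).
  have : z \in [set u; v] by rewrite -Eyz !inE eqxx orbT.
  by rewrite !inE => /orP [] /eqP ->; rewrite connect0 ?orbT.
have hd : del_edge adj [set u; v] y z by rewrite /del_edge hyz.
by rewrite !in_setU => /orP [] hy; rewrite (comp_del_step hd hy) ?orbT.
Qed.

(* Every edge other than uv lies on one of the two sides of T - uv. *)
Lemma card_edges_le_branches (u v : V) : connected_graph adj -> adj u v ->
  (#|edges adj| <= (branch u v + branch v u).+1)%N.
Proof.
move=> conn huv; set e := [set u; v].
have eE : e \in edges adj by apply/edgeP; exists u, v.
rewrite (cardsD1 e) eE ltnS /branch [[set v; u]]setUC -/e /comp_del_edges.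
apply: leq_trans (leq_card_setU _ _); apply: subset_leq_card.
apply/subsetP => A; rewrite in_setD1 => /andP [Ae AE].
have /edgeP [x [y [hxy EA]]] := AE.
have hd : del_edge adj e x y by rewrite /del_edge hxy -EA Ae.
have := comp_del_cover u v x conn; rewrite !in_setU => /orP [] /(del_edge_sub_comp hd).
  by rewrite -EA => sub; rewrite in_set AE Ae sub.
by rewrite -EA => sub; rewrite [X in _ || X]in_set AE Ae sub orbT.
Qed.

Lemma del_edge_disconnects (u v : V) :
  is_tree adj -> adj u v -> ~~ connect (del_edge adj [set u; v]) u v.
Proof.
case=> [[sym irr] _ acyc] huv; apply/negP => /connectP [p pth].
(* A shortest such path closes up with uv into a cycle of length >= 3: length 1
   would be a loop and length 2 would use uv itself. *)
case: (shortenP pth) => p' pth' up _ lst.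
have cyc : cycle adj (u :: p').
  rewrite /cycle rcons_path -lst sym huv andbT.
  by apply: sub_path pth' => x y /andP [].
have := acyc (u :: p') up; rewrite cyc.
case: p' pth' up lst {cyc} => [|a [|b q]] //=.
- by move=> _ _ E; move: huv; rewrite -E irr.
- by rewrite andbT => hd _ E; move: hd; rewrite -E /del_edge eqxx andbF.
- by move=> _ _ _ /(_ isT).
Qed.

Lemma comp_del_subset (e e' : {set V}) (u r : V) :
  ~~ (e' \subset comp_del adj e u) -> u \in comp_del adj e' r ->
  comp_del adj e u \subset comp_del adj e' r.
Proof.
move=> e'_out ur; apply/subsetP => x xu.
pose a := [pred y | (y \in comp_del adj e u) && (y \in comp_del adj e' r)].
suff /andP [] : x \in a by [].
apply: (@connect_fwd_closed _ (del_edge adj e) a u); last first.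
- by apply/andP; split=> //; rewrite inE connect0.
- by rewrite inE in xu.
move=> y z hyz /andP [yu yr]; have zu := comp_del_step hyz yu.
apply/andP; split => //; apply: comp_del_step yr.
rewrite /del_edge; case/andP: hyz => -> _ /=.
apply: contra e'_out => /eqP <-; apply/subsetP => t.
by rewrite in_set2 => /orP [] /eqP ->.
Qed.

(* Moving the oriented edge uv forward to vw strictly enlarges the back side:
   it gains u's whole side together with the edge uv itself. *)
Lemma branch_lt (u v w : V) : is_tree adj -> adj u v -> adj v w -> w != u ->
  (branch u v < branch v w)%N.
Proof.
move=> tr huv hvw wu; have [[sym irr] _ _] := tr.
set e := [set u; v]; set e' := [set v; w].
have v_out : v \notin comp_del adj e u by rewrite inE del_edge_disconnects.
have e'_out : ~~ (e' \subset comp_del adj e u).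
  by apply: contra v_out => /subsetP; apply; rewrite !inE eqxx.
have ee' : e != e'.
  apply: contra wu => /eqP E; have : u \in e' by rewrite -E !inE eqxx.
  rewrite !inE => /orP [/eqP uv|/eqP ->] //.
  by move: huv; rewrite uv irr.
have u_v : u \in comp_del adj e' v.
  by rewrite inE connect1 // /del_edge sym huv setUC.
have sub := comp_del_subset e'_out u_v.
have eE : e \in edges adj by apply/edgeP; exists u, v.
rewrite /branch /comp_del_edges -/e -/e'.
set S := [set A in _ | _]; set S' := [set A in _ | _].
have -> : #|S|.+1 = #|e |: S| by rewrite cardsU1 inE eqxx andbF.
apply/subset_leq_card/subsetP => A; rewrite in_setU1 => /orP [/eqP ->|].
  rewrite inE eE ee'; apply/subsetP => z; rewrite !inE => /orP [] /eqP ->.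
    by move: u_v; rewrite inE.
  exact: connect0.
rewrite !inE => /and3P [AE Ae Asub]; rewrite AE (subset_trans Asub sub) andbT.
by apply: contra e'_out => /eqP <-.
Qed.

Lemma tree_balanced_vertex (l : nat) : is_tree adj ->
  (2 * l + 2 <= #|edges adj|)%N ->
  exists r : V, forall ed : {set V}, ed \in edges adj -> r \in ed ->
    (l < comp_del_edges adj ed r)%N.
Proof.
move=> tr hm; have [[sym _] conn _] := tr.
pose small (p : V * V) := adj p.1 p.2 && (branch p.1 p.2 <= l)%N.
have [[u0 v0] small0|no_small] := pickP small.
  have [[u v] /andP [/= huv buv] max_uv] := arg_maxnP (fun p => branch p.1 p.2) small0.
  exists v => ed edE ved; have [w hvw ->] := incident_edgeP sym edE ved.
  have [->|wu] := eqVneq w u.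
    by have := card_edges_le_branches conn huv; rewrite -/(branch v u); lia.
  rewrite ltnNge; apply: contraL (branch_lt tr huv hvw wu) => bvw.
  by rewrite -leqNgt (max_uv (v, w)) //= /small hvw.
have /set0Pn [_ /edgeP [x [_ _]]] : edges adj != set0.
  by rewrite -card_gt0; lia.
exists x => ed edE xed; have [w hxw ->] := incident_edgeP sym edE xed.
by have := no_small (x, w); rewrite /small /= hxw /= ltnNge => ->.
Qed.

End TreeBranches.

Local Open Scope ring_scope.

Lemma ell_lt_ratio (k d : nat) : (ell k d)%:~R < (d%:R / k.+1%:R : rat).
Proof. exact: ceilB1_lt. Qed.

Lemma ell_ge0 (k d : nat) : (0 < d)%N -> 0 <= ell k d.
Proof.
by move=> d0; rewrite /ell subr_ge0 -gtz0_ge1 ceil_gt0 // divr_gt0 ?ltr0n.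
Qed.

Lemma double_ell_lt (k d : nat) : (0 < k)%N -> 2 * ell k d < d%:Z.
Proof.
move=> k0; have := ell_lt_ratio k d.
have : 2 * (d%:R / k.+1%:R) <= (d%:R : rat).
  by rewrite mulrA ler_pdivrMr ?ltr0n // [2 * _]mulrC ler_wpM2l ?ler0n // (ler_nat _ 2).
rewrite -(ltr_int rat) intrM.
move: (d%:R / _ : rat) ((ell k d)%:~R : rat) => q L; lra.
Qed.

Lemma d_le_dprime (k d : nat) : (0 < d)%N -> d%:Z <= dprime k d.
Proof.
move=> d0; rewrite /dprime lerDl ceil_ge0.
have [->|ell_neq0] := eqVneq (ell k d) 0; first by rewrite mulr0z mulr0 mul0r ltrN10.
have : 1 <= ell k d by rewrite -gtz0_ge1 lt0r ell_neq0 ell_ge0.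
rewrite -(ler1z rat); have := ell_lt_ratio k d.
move: (d%:R / _ : rat) ((ell k d)%:~R : rat) => q L Lq L1.
have kL : 0 <= k%:R * L by rewrite mulr_ge0 ?ler0n //; lra.
suff : 0 <= k%:R * L * (q - 2^-1 * (L + 1)) by lra.
by apply: mulr_ge0 => //; lra.
Qed.

Theorem lemma2p5 (k d : nat) (V : finType) (adj : rel V) :
  (0 < k)%N -> (0 < d)%N ->
  is_tree adj ->
  dprime k d + 1 <= (#|edges adj|%:Z) ->
  exists r : V, forall ed : {set V}, ed \in edges adj -> r \in ed ->
    ell k d + 1 <= (comp_del_edges adj ed r)%:Z.
Proof.
move=> k0 d0 tr hm; have := d_le_dprime k d d0; have := double_ell_lt k d k0.
case: (ell k d) (ell_ge0 k d d0) => [l _ ell_lt d_le|//].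
have /(tree_balanced_vertex tr) [r hr] : (2 * l + 2 <= #|edges adj|)%N by lia.
by exists r => ed edE red; have := hr ed edE red; lia.
Qed.
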